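(* Assume that predictions are made at $n_p$ locations $s_{p,1},\dots,s_{p,n_p}$ with covariate data $X_p$. When applying the Vecchia approximation to the joint response vector $(y_p,y)^T$ with the predicted response $y_p$ appearing first in the ordering, the conditional distribution $y_p|y$ is given by \[y_p|y\sim \mathcal{N} \left( \mu_p , \Xi_p\right),\] with \begin{equation*} \begin{split} \mu_p=& F(X_p)- \left(B_p^T{D_p}^{-1}B_p + B_{op}^T{D_o}^{-1}B_{op}\right)^{-1}B_{op}^T{D_o}^{-1}B_o\left(y-F(X)\right)\\ \Xi_p=& \left(B_p^T{D_p}^{-1}B_p + B_{op}^T{D_o}^{-1}B_{op}\right)^{-1}, \end{split} \end{equation*} where $B_{o},D_o\in\mathbb{R}^{n\times n}$, $B_{op}\in\mathbb{R}^{n\times n_p}$, $B_p,D_p\in\mathbb{R}^{n_p\times n_p}$ are the following submatrices of the Vecchia approximated precision matrix $\tilde{Cov}\left((y_p,y)^T\right)^{-1}$: $$ \tilde{Cov}\left((y_p,y)^T\right)^{-1}= \begin{pmatrix} B_p & 0 \\ B_{op}&B_o\end{pmatrix}^T \begin{pmatrix} {D_p}^{-1} & 0 \\0&{D_o}^{-1}\end{pmatrix} \begin{pmatrix} B_p & 0 \\ B_{op}&B_o\end{pmatrix}. $$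
   Context: Model: $y=F(X)+Zb+\epsilon$, $b\sim\mathcal{N}(0,\Sigma)$, $\epsilon\sim\mathcal{N}(0,\sigma^2 I_n)$, with $y\in\mathbb{R}^n$, where $b$ contains a Gaussian process with covariance function $c(\cdot,\cdot)$. Vecchia approximation of a response vector with given ordering: $p(y|F,\theta)\approx\prod_{i} p(y_i|y_{N(i)},F,\theta)$, where $N(i)$ are the indices of the nearest neighbors of location $i$ among earlier locations in the ordering; $p(y_i|y_{N(i)},F,\theta)=\mathcal{N}(y_i\mid F_i+A_i(y_{N(i)}-F_{N(i)}),D_i)$ with $A_i=(Z\Sigma Z^T)_{i,N(i)}((Z\Sigma Z^T+\sigma^2I)_{N(i)})^{-1}$ and $D_i=(Z\Sigma Z^T+\sigma^2I)_{i,i}-A_i(Z\Sigma Z^T)_{N(i),i}$. The Cholesky-type factor is the lower triangular matrix with $1$'s on the diagonal and entries $-A_i$ in positions $(i,N(i))$, and the diagonal matrix has entries $D_i$; the approximate precision is (factor)$^T$(diagonal)$^{-1}$(factor). Here this construction is applied to the joint vector $(y_p,y)$ of the prediction variable $y_p\in\mathbb{R}^{n_p}$ (following the same model at the prediction locations) and the observed response $y$, and the resulting factors are partitioned into blocks as in the claim. *)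

From HB Require Import structures.
From mathcomp Require Import all_boot all_order all_algebra.
From mathcomp Require Import all_classical all_reals all_analysis.
Set Implicit Arguments. Unset Strict Implicit. Unset Printing Implicit Defensive.
Import Order.TTheory GRing.Theory Num.Theory.
Local Open Scope ring_scope.

(* F(X): the vector (F(x_1),...,F(x_k))^T for the covariate rows of X *)
Definition fmean (R : realType) (p k : nat) (F : 'rV[R]_p -> R) (X : 'M[R]_(k, p))
  : 'cV[R]_k := \col_i F (row i X).

Definition dist2 (R : realType) (d : nat) (a b : 'rV[R]_d) : R :=
  \sum_(k < d) (a 0 k - b 0 k) ^+ 2.

Definition nn_sets (R : realType) (N d : nat) (s : 'I_N -> 'rV[R]_d) (m : nat)
  (Nb : 'I_N -> {set 'I_N}) : Prop :=
  forall i : 'I_N,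
    [/\ Nb i \subset [set j : 'I_N | (j < i)%N],
        #|Nb i| = minn m i
      & forall j j' : 'I_N, j \in Nb i -> (j' < i)%N -> j' \notin Nb i ->
          dist2 (s j) (s i) <= dist2 (s j') (s i)].

Definition psd (R : realType) (k : nat) (M : 'M[R]_k) : Prop :=
  M^T = M /\ forall x : 'cV[R]_k, 0 <= (x^T *m M *m x) 0 0.

Definition posdef (R : realType) (k : nat) (M : 'M[R]_k) : Prop :=
  M^T = M /\ forall x : 'cV[R]_k, x != 0 -> 0 < (x^T *m M *m x) 0 0.

Definition gauss1 (R : realType) (mu s2 x : R) : R :=
  (Num.sqrt (2 * pi * s2))^-1 * expR (- (x - mu) ^+ 2 / (2 * s2)).

Definition mvn_pdf (R : realType) (k : nat) (mu : 'cV[R]_k) (Xi : 'M[R]_k)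
  (x : 'cV[R]_k) : R :=
  (Num.sqrt ((2 * pi) ^+ k * \det Xi))^-1 *
  expR (- (1 / 2) * ((x - mu)^T *m invmx Xi *m (x - mu)) 0 0).

Section Vecchia.
Variables (R : realType) (N m : nat) (Z : 'M[R]_(N, m)) (Sigma : 'M[R]_m)
  (sigma2 : R) (Nb : 'I_N -> {set 'I_N}).

Definition Kmat : 'M[R]_N := Z *m Sigma *m Z^T.
Definition Cmat : 'M[R]_N := Kmat + sigma2%:M.

Definition nbi (i : 'I_N) (l : 'I_#|Nb i|) : 'I_N := enum_val l.

Definition vA (i : 'I_N) : 'rV[R]_#|Nb i| :=
  (\row_l Kmat i (nbi l)) *m invmx (\matrix_(l, l') Cmat (nbi l) (nbi l')).

Definition vD (i : 'I_N) : R :=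
  Cmat i i - (vA i *m (\col_l Kmat (nbi l) i)) 0 0.

(* the lower-triangular factor: 1 on the diagonal, -A_i at (i, N(i)) *)
Definition vB : 'M[R]_N :=
  \matrix_(i, j) ((i == j)%:R - \sum_(l < #|Nb i| | nbi l == j) vA i 0 l).

Definition vDm : 'M[R]_N := diag_mx (\row_i vD i).

Definition vQ : 'M[R]_N := vB^T *m invmx vDm *m vB.

Definition vecchia_density (mu v : 'cV[R]_N) : R :=
  \prod_(i < N) gauss1 (mu i 0 + (vA i *m \col_l (v (nbi l) 0 - mu (nbi l) 0)) 0 0)
                       (vD i) (v i 0).

End Vecchia.

From HB Require Import structures.
From mathcomp Require Import all_boot all_order all_algebra.
From mathcomp Require Import all_classical all_reals all_analysis.
From mathcomp Require Import ring.
Set Implicit Arguments. Unset Strict Implicit.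
Import Order.TTheory GRing.Theory Num.Theory.
Local Open Scope ring_scope.

(* Writing v for (y_p, y) and m for its mean (F(X_p), F(X)), the Vecchia density
   is a product of univariate normals in the residuals v_i - m_i - A_i (v - m)_N(i),
   which are the entries of B (v - m); so it equals a constant times
   exp(-1/2 (v - m)^T Q (v - m)) with Q = B^T D^-1 B.  As y_p comes first in the
   ordering, B is block lower triangular and the upper blocks of Q are
   Q_pp = Bp^T Dp^-1 Bp + Bop^T Do^-1 Bop and Q_po = Bop^T Do^-1 Bo.  Completing the
   square in y_p splits the exponent into the Gaussian kernel with precision Q_pp
   and mean F(X_p) - Q_pp^-1 Q_po (y - F(X)) plus a Schur-complement term in y alone.
   Positive definiteness: D_i is the Schur complement of i in the positive definite
   matrix Z Sigma Z^T + sigma^2 I restricted to N(i) and i, so D_i > 0; B is unit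
   triangular, so Q, Q_pp and Q_pp^-1 are positive definite. *)

Section BlockMatrix.
Variable R : comUnitRingType.

Definition schur p1 p2 (M : 'M[R]_(p1 + p2)) : 'M[R]_p2 :=
  drsubmx M - dlsubmx M *m invmx (ulsubmx M) *m ursubmx M.

Lemma sym_submx p1 p2 (M : 'M[R]_(p1 + p2)) : M^T = M ->
  [/\ (ulsubmx M)^T = ulsubmx M, (ursubmx M)^T = dlsubmx M
    & (drsubmx M)^T = drsubmx M].
Proof.
move=> MT; have := MT; rewrite -[in LHS](submxK M) tr_block_mx -{5}(submxK M).
by case/eq_block_mx=> -> _ -> ->.
Qed.

Lemma quad_col_mx p1 p2 (M : 'M[R]_(p1 + p2)) (u : 'cV[R]_p1) (v : 'cV[R]_p2) :
  (col_mx u v)^T *m M *m col_mx u v =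
  u^T *m ulsubmx M *m u + u^T *m ursubmx M *m v
  + v^T *m dlsubmx M *m u + v^T *m drsubmx M *m v.
Proof.
rewrite -mulmxA -{1}(submxK M) mul_block_col tr_col_mx mul_row_col !mulmxDr.
by rewrite !mulmxA addrA.
Qed.

Lemma quad_col_mx_schur p1 p2 (M : 'M[R]_(p1 + p2)) (u : 'cV[R]_p1) (v : 'cV[R]_p2) :
  M^T = M -> ulsubmx M \in unitmx ->
  (col_mx u v)^T *m M *m col_mx u v =
  (u + invmx (ulsubmx M) *m ursubmx M *m v)^T *m ulsubmx M *m
    (u + invmx (ulsubmx M) *m ursubmx M *m v)
  + v^T *m schur M *m v.
Proof.
move=> MT Au; have [ulT urT _] := sym_submx MT; rewrite quad_col_mx /schur.
set A := ulsubmx M in ulT Au *; set b := ursubmx M in urT *.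
set w := invmx A *m b *m v.
have Aw : A *m w = b *m v by rewrite /w !mulmxA mulmxV // mul1mx.
have wA : w^T *m A = v^T *m dlsubmx M by rewrite -ulT -trmx_mul Aw trmx_mul urT.
rewrite -/w mulmxDr raddfD /= !mulmxDl wA -(mulmxA u^T A w) Aw mulmxBr mulmxBl.
rewrite /w !mulmxA addrACA addrK [RHS]addrAC.
by rewrite (addrAC (u^T *m A *m u)).
Qed.

Lemma det_schur p1 p2 (M : 'M[R]_(p1 + p2)) :
  ulsubmx M \in unitmx -> \det M = \det (ulsubmx M) * \det (schur M).
Proof.
move=> Au; pose L := block_mx 1%:M 0 (- (dlsubmx M *m invmx (ulsubmx M))) 1%:M.
have LM : L *m M = block_mx (ulsubmx M) (ursubmx M) 0 (schur M).
  rewrite -{1}(submxK M) mulmx_block !mul1mx !mul0mx !addr0 !mulNmx.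
  by rewrite -mulmxA mulVmx // mulmx1 addNr addrC.
have := congr1 determinant LM.
by rewrite det_mulmx det_lblock det_ublock !det1 !mul1r.
Qed.

End BlockMatrix.

Section PositiveDefinite.
Variable R : realType.

Lemma posdef_ulsubmx p1 p2 (M : 'M[R]_(p1 + p2)) :
  posdef M -> posdef (ulsubmx M).
Proof.
case=> MT Mpos; have [ulT _ _] := sym_submx MT; split=> // x x0.
have := Mpos (col_mx x 0); rewrite col_mx_eq0 negb_and x0 quad_col_mx.
by rewrite trmx0 !mulmx0 !mul0mx !addr0; apply.
Qed.

Lemma posdef_schur p1 p2 (M : 'M[R]_(p1 + p2)) :
  posdef M -> ulsubmx M \in unitmx -> posdef (schur M).
Proof.
case=> MT Mpos Au; have [ulT urT drT] := sym_submx MT; split.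
  by rewrite /schur raddfB /= !trmx_mul trmx_inv ulT urT drT -urT trmxK mulmxA.
move=> v v0; set u := - (invmx (ulsubmx M) *m ursubmx M *m v).
have := Mpos (col_mx u v); rewrite col_mx_eq0 negb_and v0 orbT.
by rewrite quad_col_mx_schur // addNr trmx0 !mul0mx add0r; apply.
Qed.

Lemma posdef_det_gt0 k (M : 'M[R]_k) : posdef M -> 0 < \det M.
Proof.
elim: k M => [|k IHk] M Mpd; first by rewrite det_mx00.
have [_ ulpos] := @posdef_ulsubmx 1 k M Mpd.
have ul_gt0 : 0 < ulsubmx (M : 'M[R]_(1 + k)) 0 0.
  by have := ulpos 1%:M; rewrite oner_eq0 trmx1 mul1mx mulmx1; apply.
have Au : ulsubmx (M : 'M[R]_(1 + k)) \in unitmx.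
  by rewrite unitmxE det_mx11 unitfE gt_eqF.
by rewrite (det_schur Au) det_mx11 mulr_gt0 // IHk //; apply: posdef_schur.
Qed.

Lemma posdef_unitmx k (M : 'M[R]_k) : posdef M -> M \in unitmx.
Proof. by move/posdef_det_gt0; rewrite unitmxE unitfE => /gt_eqF ->. Qed.

Lemma posdef_invmx k (M : 'M[R]_k) : posdef M -> posdef (invmx M).
Proof.
move=> Mpd; have Mu := posdef_unitmx Mpd; case: Mpd => MT Mpos.
split=> [|x x0]; first by rewrite trmx_inv MT.
have y0 : invmx M *m x != 0.
  by apply: contraNneq x0 => y0; rewrite -(mulKVmx Mu x) y0 mulmx0.
have := Mpos _ y0; rewrite trmx_mul trmx_inv MT -!mulmxA (mulmxA M) mulmxV //.
by rewrite mul1mx.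
Qed.

Lemma posdef_congr k (M B : 'M[R]_k) :
  posdef M -> B \in unitmx -> posdef (B^T *m M *m B).
Proof.
case=> MT Mpos Bu; split=> [|x x0]; first by rewrite !trmx_mul trmxK MT mulmxA.
have Bx0 : B *m x != 0.
  by apply: contraNneq x0 => Bx0; rewrite -(mulKmx Bu x) Bx0 mulmx0.
by have := Mpos _ Bx0; rewrite trmx_mul !mulmxA.
Qed.

Lemma posdef_diag_gt0 k (M : 'M[R]_k) i : posdef M -> 0 < M i i.
Proof.
case=> _ /(_ (delta_mx i 0)); rewrite trmx_delta -rowE -colE !mxE; apply.
apply/eqP => /matrixP/(_ i 0); rewrite !mxE !eqxx; exact/eqP/oner_neq0.
Qed.

Lemma quad_diag_mx k (u : 'cV[R]_k) (d : 'rV[R]_k) :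
  (u^T *m diag_mx d *m u) 0 0 = \sum_i d 0 i * u i 0 ^+ 2.
Proof.
by rewrite mul_mx_diag mxE; apply: eq_bigr => i _; rewrite !mxE expr2 mulrAC mulrC.
Qed.

Lemma posdef_diag_mx k (d : 'rV[R]_k) :
  (forall i, 0 < d 0 i) -> posdef (diag_mx d).
Proof.
move=> d_gt0; split=> [|u u0]; first exact: tr_diag_mx.
have [i ui0] : exists i, u i 0 != 0.
  apply/existsP; apply: contraNT u0 => /existsPn u0.
  by apply/eqP/matrixP => i j; rewrite ord1 mxE; apply/eqP/negbNE/u0.
rewrite quad_diag_mx (bigD1 i) //= ltr_pwDl //.
  by rewrite mulr_gt0 ?d_gt0 ?exprn_even_gt0.
by apply: sumr_ge0 => j _; rewrite mulr_ge0 ?sqr_ge0 // ltW.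
Qed.

Lemma psd_posdefD k (A B : 'M[R]_k) : psd A -> posdef B -> posdef (A + B).
Proof.
case=> AT Apos [BT Bpos]; split=> [|x x0]; first by rewrite raddfD /= AT BT.
by rewrite mulmxDr mulmxDl mxE ltr_wpDl // Bpos.
Qed.

Lemma posdef_mxsub N k (f : 'I_k -> 'I_N) (M : 'M[R]_N) :
  injective f -> posdef M -> posdef (mxsub f f M).
Proof.
move=> finj [MT Mpos]; pose E : 'M[R]_(N, k) := colsub f 1%:M.
have EM (A : 'M[R]_N) : mxsub f f A = E^T *m A *m E.
  rewrite -mulmxA /E mulmx_colsub mulmx1 -[A in LHS]mul1mx mxsub_mul.
  by rewrite trmx_mxsub trmx1.
have ETE : E^T *m E = 1%:M.
  by rewrite -[E^T]mulmx1 -EM; apply/matrixP => a b; rewrite !mxE (inj_eq finj).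
split=> [|x x0]; first by rewrite trmx_mxsub MT.
have Ex0 : E *m x != 0.
  by apply: contraNneq x0 => Ex0; rewrite -[x]mul1mx -ETE -mulmxA Ex0 mulmx0.
by have := Mpos _ Ex0; rewrite EM trmx_mul !mulmxA.
Qed.

End PositiveDefinite.

Lemma invmx_diag (F : fieldType) k (d : 'rV[F]_k) :
  (forall i, d 0 i != 0) -> invmx (diag_mx d) = diag_mx (\row_i (d 0 i)^-1).
Proof.
move=> d_neq0; have dd : diag_mx d *m diag_mx (\row_i (d 0 i)^-1) = 1%:M.
  rewrite mulmx_diag -diag_const_mx; congr diag_mx.
  by apply/matrixP => i j; rewrite !mxE divff.
have [du _] := mulmx1_unit dd.
by rewrite -[invmx _]mulmx1 -dd mulKmx.
Qed.

Lemma submx_tr_block_lower_quad (R : pzRingType) p1 p2 (Bp : 'M[R]_p1)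
    (Bop : 'M[R]_(p2, p1)) (Bo : 'M[R]_p2) (Ep : 'M[R]_p1) (Eo : 'M[R]_p2) :
  let Q := (block_mx Bp 0 Bop Bo)^T *m block_mx Ep 0 0 Eo *m block_mx Bp 0 Bop Bo in
  ulsubmx Q = Bp^T *m Ep *m Bp + Bop^T *m Eo *m Bop /\
  ursubmx Q = Bop^T *m Eo *m Bo.
Proof.
rewrite /= tr_block_mx trmx0 !mulmx_block block_mxKul block_mxKur.
by rewrite !(mulmx0, mul0mx, addr0, add0r).
Qed.

Section Vecchia.
Variables (R : realType) (N m : nat) (Z : 'M[R]_(N, m)) (Sigma : 'M[R]_m)
  (sigma2 : R) (Nb : 'I_N -> {set 'I_N}).
Hypotheses (Sigma_psd : psd Sigma) (sigma2_gt0 : 0 < sigma2)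
  (Nb_earlier : forall i, Nb i \subset [set j : 'I_N | (j < i)%N]).

Local Notation K := (Kmat Z Sigma).
Local Notation C := (Cmat Z Sigma sigma2).
Local Notation A := (vA Z Sigma sigma2 Nb).
Local Notation D := (vD Z Sigma sigma2 Nb).
Local Notation B := (vB Z Sigma sigma2 Nb).

Lemma Kmat_psd : psd K.
Proof.
case: Sigma_psd => ST Spos; split; first by rewrite !trmx_mul trmxK ST mulmxA.
by move=> x; have := Spos (Z^T *m x); rewrite trmx_mul trmxK !mulmxA.
Qed.

Lemma Cmat_posdef : posdef C.
Proof.
apply: psd_posdefD Kmat_psd _; rewrite -diag_const_mx.
by apply: posdef_diag_mx => i; rewrite mxE.
Qed.

Lemma nbi_lt i (l : 'I_#|Nb i|) : (nbi l < i)%N.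
Proof. by have := fintype.subsetP (Nb_earlier i) _ (enum_valP l); rewrite inE. Qed.

Lemma nbi_neq i (l : 'I_#|Nb i|) : (nbi l == i) = false.
Proof. by apply/negbTE; apply: contraTneq (nbi_lt l) => ->; rewrite ltnn. Qed.

Definition nb_ext i (a : 'I_(#|Nb i| + 1)) : 'I_N :=
  if fintype.split a is inl l then nbi l else i.
Arguments nb_ext : clear implicits.

Lemma nb_ext_inj i : injective (nb_ext i).
Proof.
move=> a b; rewrite /nb_ext -{2}(splitK a) -{2}(splitK b).
case: (fintype.split a) => [l|u]; case: (fintype.split b) => [l'|u'] //=.
- by move/enum_val_inj => ->.
- by move=> E; have := nbi_lt l; rewrite E ltnn.
- by move=> E; have := nbi_lt l'; rewrite -E ltnn.
- by rewrite (ord1 u) (ord1 u').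
Qed.

Lemma schur_nb_ext i : schur (mxsub (nb_ext i) (nb_ext i) C) 0 0 = D i.
Proof.
have split_l (l : 'I_#|Nb i|) : fintype.split (lshift 1 l) = inl l.
  exact: (unsplitK (inl _ l)).
have split_r (l : 'I_1) : fintype.split (rshift #|Nb i| l) = inr l.
  exact: (unsplitK (inr _ l)).
rewrite /schur; set Ci := mxsub _ _ C.
have -> : ulsubmx Ci = \matrix_(l, l') C (nbi l) (nbi l').
  by apply/matrixP => a b; rewrite !mxE /nb_ext !split_l.
have -> : dlsubmx Ci = \row_l K i (nbi l).
  apply/matrixP => a b; rewrite !mxE /nb_ext split_l split_r.
  by rewrite eq_sym nbi_neq mulr0n addr0.
have -> : ursubmx Ci = \col_l K (nbi l) i.
  by apply/matrixP => a b; rewrite !mxE /nb_ext split_l split_r nbi_neq mulr0n addr0.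
have dr : drsubmx Ci 0 0 = C i i by rewrite !mxE /nb_ext split_r.
by rewrite [LHS]mxE [X in _ + X]mxE dr.
Qed.

Lemma vD_gt0 i : 0 < D i.
Proof.
rewrite -schur_nb_ext; apply/posdef_diag_gt0/posdef_schur.
  exact/posdef_mxsub/Cmat_posdef/nb_ext_inj.
exact/posdef_unitmx/posdef_ulsubmx/posdef_mxsub/Cmat_posdef/nb_ext_inj.
Qed.

Lemma vB_le (i j : 'I_N) : (i <= j)%N -> B i j = (i == j)%:R.
Proof.
move=> le_ij; rewrite mxE big_pred0 ?subr0 // => l.
by apply/negbTE; apply: contraTneq (nbi_lt l) => ->; rewrite -leqNgt.
Qed.

Lemma vB_trig : is_trig_mx B.
Proof.
by apply/is_trig_mxP => i j lt_ij; rewrite vB_le ?(ltnW lt_ij) // -val_eqE ltn_eqF.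
Qed.

Lemma vB_unitmx : B \in unitmx.
Proof.
rewrite unitmxE det_trig ?vB_trig // big1 ?unitr1 // => i _.
by rewrite vB_le // eqxx.
Qed.

Lemma vDm_unitmx : vDm Z Sigma sigma2 Nb \in unitmx.
Proof.
rewrite unitmxE det_diag unitfE; apply/prodf_neq0 => i _.
by rewrite mxE gt_eqF ?vD_gt0.
Qed.

Lemma vDm_invmx : invmx (vDm Z Sigma sigma2 Nb) = diag_mx (\row_i (D i)^-1).
Proof.
rewrite /vDm invmx_diag => [|i]; last by rewrite mxE gt_eqF ?vD_gt0.
by congr diag_mx; apply/matrixP => i j; rewrite !mxE.
Qed.

Lemma vQ_posdef : posdef (vQ Z Sigma sigma2 Nb).
Proof.
apply: posdef_congr vB_unitmx; rewrite vDm_invmx.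
by apply: posdef_diag_mx => i; rewrite mxE invr_gt0 vD_gt0.
Qed.

Lemma vB_mul_residual (mu v : 'cV[R]_N) i :
  (B *m (v - mu)) i 0 =
  v i 0 - (mu i 0 + (A i *m \col_l (v (nbi l) 0 - mu (nbi l) 0)) 0 0).
Proof.
rewrite !mxE; under eq_bigr => j _ do rewrite !mxE mulrBl.
rewrite sumrB (bigD1 i) //= eqxx mul1r big1 => [|j /negbTE]; last first.
  by rewrite eq_sym => ->; rewrite mul0r.
rewrite addr0 opprD addrA; congr (_ - _).
under eq_bigr => j _ do rewrite mulr_suml.
rewrite (exchange_big_dep predT) //=; apply: eq_bigr => l _.
by rewrite mxE (big_pred1 (nbi l)) // => j; apply: eq_sym.
Qed.

Lemma vecchia_densityE (mu v : 'cV[R]_N) :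
  vecchia_density Z Sigma sigma2 Nb mu v =
  (\prod_i (Num.sqrt (2 * pi * D i))^-1) *
  expR (- (1 / 2) * ((v - mu)^T *m vQ Z Sigma sigma2 Nb *m (v - mu)) 0 0).
Proof.
rewrite /vecchia_density /gauss1 big_split /= -expR_sum; congr (_ * expR _).
have -> : (v - mu)^T *m vQ Z Sigma sigma2 Nb *m (v - mu) =
    (B *m (v - mu))^T *m diag_mx (\row_i (D i)^-1) *m (B *m (v - mu)).
  by rewrite /vQ vDm_invmx trmx_mul !mulmxA.
rewrite quad_diag_mx mulr_sumr; apply: eq_bigr => i _.
have D_neq0 : D i != 0 by rewrite gt_eqF ?vD_gt0.
by rewrite vB_mul_residual !mxE; field.
Qed.

End Vecchia.

Lemma vQ_upper_submx (R : realType) p1 p2 m (Z : 'M[R]_(p1 + p2, m))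
    (Sigma : 'M[R]_m) (sigma2 : R) (Nb : 'I_(p1 + p2) -> {set 'I_(p1 + p2)}) :
  psd Sigma -> 0 < sigma2 ->
  (forall i, Nb i \subset [set j : 'I_(p1 + p2) | (j < i)%N]) ->
  let B := vB Z Sigma sigma2 Nb in let Dm := vDm Z Sigma sigma2 Nb in
  let Q := vQ Z Sigma sigma2 Nb in
  ulsubmx Q = (ulsubmx B)^T *m invmx (ulsubmx Dm) *m ulsubmx B
              + (dlsubmx B)^T *m invmx (drsubmx Dm) *m dlsubmx B /\
  ursubmx Q = (dlsubmx B)^T *m invmx (drsubmx Dm) *m drsubmx B.
Proof.
move=> Sigma_psd sigma2_gt0 Nb_earlier B Dm Q.
have EB : B = block_mx (ulsubmx B) 0 (dlsubmx B) (drsubmx B).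
  by rewrite -(ursubmx_trig (leqnn p1) (vB_trig Z Sigma sigma2 Nb_earlier)) submxK.
have Dm_diag : is_diag_mx Dm := diag_mx_is_diag _.
have EDm : Dm = block_mx (ulsubmx Dm) 0 0 (drsubmx Dm).
  rewrite -(ursubmx_trig (leqnn p1) (is_diag_mx_is_trig Dm_diag)).
  by rewrite -(dlsubmx_diag (leqnn p1) Dm_diag) submxK.
have EinvDm : invmx Dm = block_mx (invmx (ulsubmx Dm)) 0 0 (invmx (drsubmx Dm)).
  by rewrite {1}EDm invmx_block_diag // -EDm vDm_unitmx.
rewrite /Q /vQ -/B -/Dm EinvDm.
set Bp := ulsubmx B; set Bop := dlsubmx B; set Bo := drsubmx B.
by rewrite EB; apply: submx_tr_block_lower_quad.
Qed.

Unset Implicit Arguments. Set Strict Implicit.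

Theorem proposition4 (R : realType) (np n p d m mnb : nat)
  (F : 'rV[R]_p -> R) (X : 'M[R]_(n, p)) (Xp : 'M[R]_(np, p))
  (s : 'I_(np + n) -> 'rV[R]_d)
  (Z : 'M[R]_(np + n, m)) (Sigma : 'M[R]_m) (sigma2 : R)
  (Nb : 'I_(np + n) -> {set 'I_(np + n)}) :
  psd Sigma -> 0 < sigma2 -> nn_sets s mnb Nb ->
  let B := vB Z Sigma sigma2 Nb in
  let D := vDm Z Sigma sigma2 Nb in
  let Bp : 'M[R]_np := ulsubmx B in
  let Bop : 'M[R]_(n, np) := dlsubmx B in
  let Bo : 'M[R]_n := drsubmx B in
  let Dp : 'M[R]_np := ulsubmx D in
  let Do : 'M[R]_n := drsubmx D in
  let Xi := invmx (Bp^T *m invmx Dp *m Bp + Bop^T *m invmx Do *m Bop) in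
  let mu (y : 'cV[R]_n) :=
    fmean F Xp - Xi *m Bop^T *m invmx Do *m Bo *m (y - fmean F X) in
  posdef Xi /\
  exists g : 'cV[R]_n -> R, forall (yp : 'cV[R]_np) (y : 'cV[R]_n),
    vecchia_density Z Sigma sigma2 Nb (col_mx (fmean F Xp) (fmean F X)) (col_mx yp y)
    = mvn_pdf (mu y) Xi yp * g y.
Proof.
move=> Sigma_psd sigma2_gt0 Nb_nn B D Bp Bop Bo Dp Do Xi mu.
have Nb_earlier i : Nb i \subset [set j : 'I_(np + n) | (j < i)%N].
  by case: (Nb_nn i).
pose Q := vQ Z Sigma sigma2 Nb.
have [ulQ urQ] := vQ_upper_submx Z Sigma_psd sigma2_gt0 Nb_earlier.
have Xi_Q : Xi = invmx (ulsubmx Q) by rewrite ulQ.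
have Q_posdef : posdef Q by exact: vQ_posdef.
have [QT _] := Q_posdef.
have Qpp_unit : ulsubmx Q \in unitmx by exact/posdef_unitmx/posdef_ulsubmx.
have Xi_posdef : posdef Xi by rewrite Xi_Q; exact/posdef_invmx/posdef_ulsubmx.
split=> //.
pose c := \prod_i (Num.sqrt (2 * pi * vD Z Sigma sigma2 Nb i))^-1.
pose sq := Num.sqrt ((2 * pi) ^+ np * \det Xi).
have sq_neq0 : sq != 0.
  rewrite gt_eqF // sqrtr_gt0 mulr_gt0 ?posdef_det_gt0 //.
  by rewrite exprn_gt0 // mulr_gt0 ?pi_gt0.
exists (fun y => c * sq *
  expR (- (1 / 2) * ((y - fmean F X)^T *m schur Q *m (y - fmean F X)) 0 0)) => yp y.
rewrite vecchia_densityE // opp_col_mx add_col_mx quad_col_mx_schur //.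
have -> : yp - fmean F Xp + invmx (ulsubmx Q) *m ursubmx Q *m (y - fmean F X)
          = yp - mu y.
  by rewrite -Xi_Q urQ /mu !mulmxA opprB addrA addrAC.
by rewrite /mvn_pdf -/sq -/c Xi_Q invmxK mxE mulrDr expRD; field.
Qed.
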